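(* Let $U\in\mathcal U_n$ and let $U'\in\mathcal U_{n+1}$ be obtained from $U$ by adding an $(n+1)$-st unit interval $I_{n+1}$ to the right of the intervals of $U$; let $\ell$ be the level of $n+1$ in $U'$. The area sequence of $p(U')$ is obtained from that of $p(U)$ by inserting one letter equal to $\ell$. Let $r$ be the number of occurrences of the letter $\ell$ in the area sequence of $p(U)$ plus the number of occurrences of the letter $\ell-1$ appearing after the position of this inserted letter $\ell$ in the area sequence of $p(U')$. Then $\zeta(p(U'))$ is obtained from $\zeta(p(U))$ by adding a final peak in position $(n-r,n+1)$.
   Context: A unit interval order on $\{1,\dots,n\}$ is given by closed intervals $I_1,\dots,I_n$ of length $1$, numbered from left to right, with $i\prec j$ iff $I_i$ lies strictly to the left of $I_j$; $\mathcal U_n$ is the set of these; adding $I_{n+1}$ to the right means $I_1,\dots,I_{n+1}$ remain numbered from left to right. Levels in $U'$: $\ell(1)=0$, and $\ell(j)=\max_{i\prec j}\ell(i)+1$ (or $0$ if no $i\prec j$). A Dyck path of length $n$ is a lattice path from $(0,0)$ to $(n,n)$ with up steps $a$ and right steps $b$ never going below $y=x$; its area sequence lists row by row from bottom to top the number of unit boxes between path and diagonal. For a nonnegative integer sequence $w$, $P(w)$ is the poset on $\{1,\dots,n\}$ with $i\prec j$ iff $w_j-w_i\ge 2$, or $w_j-w_i=1$ and $i<j$. For each $U\in\mathcal U_n$ there is a unique $w$ that is the area sequence of a Dyck path with $P(w)\cong U$; $p(U)$ is the Dyck path with area sequence $w$. The zeta map: label the top endpoint of each up step of $D$ by $a$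 and the right endpoint of each right step by $b$; read the labels along $y=x$ from bottom-left to top-right, then along $y=x+1$, then $y=x+2$, etc.; reading $b$ as an up step and $a$ as a right step gives $\zeta(D)$. Adding a final peak in position $(i,n+1)$ to a Dyck path $D$ of length $n$ means: $D$ passes through $(i,n)$, and the new path of length $n+1$ follows $D$ up to $(i,n)$, then takes an up step to $(i,n+1)$, then right steps to $(n+1,n+1)$. *)

From mathcomp Require Import all_boot all_order all_algebra.
From mathcomp Require Export reals.
Set Implicit Arguments. Unset Strict Implicit. Unset Printing Implicit Defensive.

(* Lattice paths are words over bool: true = up step a, false = right step b. *)

Definition dyck (n : nat) (D : seq bool) : bool :=
  [&& size D == 2 * n, count id D == n &
      all (fun k => count (fun b => ~~ b) (take k D) <= count id (take k D))
          (iota 0 (size D).+1)].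

(* Area sequence: for the up step at position k (the i-th up step, rows bottom
   to top) with x right steps before it, the area in that row is i - x. *)
Definition area (D : seq bool) : seq nat :=
  [seq count id (take k D) - count (fun b => ~~ b) (take k D)
  | k <- iota 0 (size D) & nth false D k].

Definition Prel (w : seq nat) (i j : nat) : bool :=
  (nth 0 w i + 2 <= nth 0 w j) || ((nth 0 w i).+1 == nth 0 w j) && (i < j).

Definition rel_iso (n : nat) (P Q : nat -> nat -> bool) : Prop :=
  exists f : 'I_n -> 'I_n, bijective f /\
    forall i j : 'I_n, P i j = Q (f i) (f j).

Definition step_diag (D : seq bool) (k : nat) : nat :=
  count id (take k.+1 D) - count (fun b => ~~ b) (take k.+1 D).

(* zeta map: read labels diagonal by diagonal (y = x, y = x+1, ...), each
   diagonal from bottom-left to top-right (= path order); label a (up step)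
   becomes a right step, label b (right step) becomes an up step. *)
Definition zeta (n : nat) (D : seq bool) : seq bool :=
  flatten [seq [seq ~~ nth false D k | k <- iota 0 (size D) & step_diag D k == d]
          | d <- iota 0 n.+1].

Definition passes_through (D : seq bool) (i m : nat) : Prop :=
  exists2 t, t <= size D &
    count id (take t D) = m /\ count (fun b => ~~ b) (take t D) = i.

(* Adding a final peak in position (i, n+1) to a Dyck path D of length n:
   follow D up to (i, n) (its first n + i steps), then one up step,
   then right steps to (n+1, n+1). *)
Definition add_final_peak (n : nat) (D : seq bool) (i : nat) : seq bool :=
  take (n + i) D ++ true :: nseq (n.+1 - i) false.

Definition insert_at (k : nat) (a : nat) (s : seq nat) : seq nat :=
  take k s ++ a :: drop k s.

From mathcomp Require Import all_boot all_order all_algebra.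
From mathcomp Require Import reals.
From mathcomp Require Import zify.
Import Order.TTheory GRing.Theory Num.Theory.
Set Implicit Arguments. Unset Strict Implicit. Unset Printing Implicit Defensive.

(* In P(w), for an area sequence w, the level of position j is w_j, and w is
   recovered from the numbers of elements of each level having at most c
   predecessors; so the area sequence of p(U) is determined by U.  The new
   interval I_{n+1} has the top level l; deleting its position e from the area
   sequence w' of p(U') leaves an area sequence whose poset is U, so w' is the
   area sequence of p(U) with l inserted at e.  As I_{n+1} lies weakly right of
   every interval, no entry l - 1 after position e is followed by an entry l.
   Reading zeta diagonal by diagonal off the area sequence, the insertion only
   changes the diagonals l and l + 1: zeta(p(U)) is a word X followed by r right
   steps, and zeta(p(U')) is X, an up step, then r + 1 right steps. *)

(** * Zeta read off the area sequence *)

Definition height (s : seq bool) : nat := count id s - count (fun b => ~~ b) s.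

Definition dyck_prefix (s : seq bool) : Prop :=
  forall k, count (fun b => ~~ b) (take k s) <= count id (take k s).

Definition zeta_diag (d : nat) (D : seq bool) : seq bool :=
  [seq ~~ nth false D k | k <- iota 0 (size D) & step_diag D k == d].

(* The up steps ending on the diagonal y = x + d are those of the rows of area
   d - 1 (read as false); the right steps ending there correspond, in order, to
   the rows of area d (read as true). *)
Definition area_diag (d : nat) (w : seq nat) : seq bool :=
  [seq v == d | v <- w & (v == d) || (v.+1 == d)].

Definition zeta_area (m : nat) (w : seq nat) : seq bool :=
  flatten [seq area_diag d w | d <- iota 0 m].

Definition area_seq (w : seq nat) : Prop :=
  nth 0 w 0 = 0 /\ forall i, nth 0 w i.+1 <= (nth 0 w i).+1.

Lemma take_rcons_le T (s : seq T) b k : k <= size s -> take k (rcons s b) = take k s.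
Proof. by move=> hk; rewrite -cats1 takel_cat. Qed.

Lemma dyck_prefix_rcons s b : dyck_prefix (rcons s b) -> dyck_prefix s.
Proof.
move=> H k; case: (leqP k (size s)) => hk; first by have := H k; rewrite take_rcons_le.
by rewrite take_oversize ?(ltnW hk) //; have := H (size s); rewrite take_rcons_le // take_size.
Qed.

Lemma dyck_prefix_count s : dyck_prefix s -> count (fun b => ~~ b) s <= count id s.
Proof. by move=> H; have := H (size s); rewrite take_size. Qed.

Lemma height_rcons s b : dyck_prefix (rcons s b) ->
  height (rcons s b) = if b then (height s).+1 else (height s).-1.
Proof.
move=> H; have := dyck_prefix_count H; have := dyck_prefix_count (dyck_prefix_rcons H).
by rewrite /height -!cats1 !count_cat; case: b {H} => /=; lia.
Qed.

Lemma zeta_diag_rcons d s b :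
  zeta_diag d (rcons s b) =
  zeta_diag d s ++ (if height (rcons s b) == d then [:: ~~ b] else [::]).
Proof.
rewrite /zeta_diag size_rcons -addn1 iotaD filter_cat map_cat /= add0n.
congr (_ ++ _); last first.
  rewrite /step_diag take_oversize ?size_rcons // -/(height _).
  by case: ifP => //= _; rewrite nth_rcons ltnn eqxx.
rewrite (@eq_in_filter _ _ (fun k => step_diag s k == d)) => [|k]; last first.
  by rewrite mem_iota => /andP[_ hk]; rewrite /step_diag take_rcons_le.
apply/eq_in_map => k; rewrite mem_filter mem_iota => /andP[_ /andP[_ hk]].
by rewrite nth_rcons hk.
Qed.

Lemma area_rcons s b : area (rcons s b) = area s ++ (if b then [:: height s] else [::]).
Proof.
rewrite /area size_rcons -addn1 iotaD filter_cat map_cat /= add0n.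
congr (_ ++ _); last first.
  by rewrite nth_rcons ltnn eqxx; case: b => /=; rewrite ?take_rcons_le ?take_size.
rewrite (@eq_in_filter _ _ (nth false s)) => [|k]; last first.
  by rewrite mem_iota => /andP[_ hk]; rewrite nth_rcons hk.
apply/eq_in_map => k; rewrite mem_filter mem_iota => /andP[_ /andP[_ hk]].
by rewrite take_rcons_le // ltnW.
Qed.

Lemma area_diag_cat d w1 w2 : area_diag d (w1 ++ w2) = area_diag d w1 ++ area_diag d w2.
Proof. by rewrite /area_diag filter_cat map_cat. Qed.

Lemma area_diag_area s d : dyck_prefix s ->
  area_diag d (area s) = zeta_diag d s ++ (if d < height s then [:: true] else [::]).
Proof.
elim/last_ind: s => [//|s b IH] H.
have Hs := dyck_prefix_rcons H.
rewrite area_rcons zeta_diag_rcons area_diag_cat IH // -!catA height_rcons //.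
have hpos : ~~ b -> 0 < height s.
  move: (dyck_prefix_count H); rewrite /height -!cats1 !count_cat /=; case: b {H}; lia.
congr (_ ++ _); case: b hpos {H} => /= hpos; rewrite /area_diag /=;
  repeat case: ifP => /=; move=> *; (by []) || (exfalso; lia) || (congr [:: _]; lia).
Qed.

Lemma area_seq_rconsP w a :
  area_seq (rcons w a) <-> area_seq w /\ a <= (if w is [::] then 0 else (last 0 w).+1).
Proof.
rewrite /area_seq; split=> [[h0 hS]|[[h0 hS] ha]].
  split; last first.
    case: w h0 hS => [<- //|v w _ /(_ (size w))].
    by rewrite !nth_rcons /= ltnn eqxx leqnn (last_nth 0).
  split=> [|i]; first by case: w h0 {hS}.
  have := hS i; rewrite !nth_rcons.
  case: (ltnP i.+1 (size w)) => hi; first by rewrite (ltnW hi).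
  by rewrite (nth_default 0 hi).
split=> [|i]; first by case: w h0 ha {hS} => [_|//]; rewrite leqn0 => /eqP.
rewrite !nth_rcons; case: (ltngtP i.+1 (size w)) => hi //.
by case: w hi ha {h0 hS} => [//|v w] [->]; rewrite (last_nth 0).
Qed.

Lemma area_seq_le w i : area_seq w -> nth 0 w i <= i.
Proof. by case=> h0 hS; elim: i => [|i IH]; [rewrite h0 | exact: leq_trans (hS i) _]. Qed.

Lemma area_seq_lt_size w : area_seq w -> all (fun v => v < size w) w.
Proof.
by move=> hw; apply/(all_nthP 0) => i hi; apply: leq_ltn_trans (area_seq_le i hw) hi.
Qed.

(* The height is the area of the row that the next up step would open. *)
Lemma area_seq_area s : dyck_prefix s -> area_seq (rcons (area s) (height s)).
Proof.
elim/last_ind: s => [|s b IH] H; first by split=> // -[|i].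
have Hs := dyck_prefix_rcons H; have /area_seq_rconsP[Ha hb] := IH Hs.
rewrite area_rcons height_rcons //; case: b H => H /=.
  rewrite cats1; apply/area_seq_rconsP; split; first exact: IH.
  by case: (area s) => [|v w] /=; rewrite ?last_rcons.
rewrite cats0; apply/area_seq_rconsP; split=> //; exact: leq_trans (leq_pred _) hb.
Qed.

Lemma size_area s : size (area s) = count id s.
Proof.
elim/last_ind: s => [//|s b IH].
by rewrite area_rcons size_cat IH -cats1 count_cat; case: b.
Qed.

Lemma dyck_area n D : dyck n D ->
  [/\ dyck_prefix D, height D = 0, area_seq (area D) & size (area D) = n].
Proof.
case/and3P=> /eqP hs /eqP hc /allP hp.
have HD : dyck_prefix D.
  move=> k; case: (leqP k (size D)) => hk; first by apply: hp; rewrite mem_iota.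
  rewrite take_oversize ?(ltnW hk) //.
  by have := hp (size D); rewrite take_size mem_iota; apply; lia.
have h0 : height D = 0.
  by have := count_predC id D; rewrite /height hs hc; move: (count _ D) => c; lia.
by split=> //; [case/area_seq_rconsP: (area_seq_area HD) | rewrite size_area].
Qed.

Lemma zeta_dyck n D : dyck n D -> zeta n D = zeta_area n.+1 (area D).
Proof.
case/dyck_area=> HD h0 _ _; rewrite /zeta /zeta_area; congr flatten.
by apply: eq_map => d; rewrite area_diag_area // h0 cats0.
Qed.

(** * Inserting a letter of maximal value *)

Lemma count_add (a1 a2 a3 : pred nat) s :
  (forall v, a1 v + a2 v = a3 v) -> count a1 s + count a2 s = count a3 s.
Proof. by move=> H; elim: s => //= v s <-; rewrite -H addnACA. Qed.

Lemma area_diag_cons d v w :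
  area_diag d (v :: w) =
  (if (v == d) || (v.+1 == d) then [:: v == d] else [::]) ++ area_diag d w.
Proof. by rewrite /area_diag /=; case: ifP. Qed.

Lemma area_diag_nil d w :
  all (fun v => (v != d) && (v.+1 != d)) w -> area_diag d w = [::].
Proof.
elim: w => //= v w IH /andP[/andP[/negbTE hd /negbTE hd'] /IH].
by rewrite area_diag_cons hd hd'.
Qed.

Lemma count_area_diag d w : count id (area_diag d w) = count_mem d w.
Proof.
by rewrite /area_diag count_map count_filter; apply: eq_count => v /=; case: eqP.
Qed.

Lemma count_neg_area_diag d w :
  count (fun b => ~~ b) (area_diag d w) = count (fun v => v.+1 == d) w.
Proof.
rewrite /area_diag count_map count_filter; apply: eq_count => v /=.
by case: (eqVneq v d) => [->|]; rewrite ?orbF //= (gtn_eqF (ltnSn d)).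
Qed.

Lemma zeta_areaS m w : zeta_area m.+1 w = zeta_area m w ++ area_diag m w.
Proof. by rewrite /zeta_area -addn1 iotaD map_cat flatten_cat /= cats0. Qed.

Lemma count_zeta_area m w : count id (zeta_area m w) = count (fun v => v < m) w.
Proof.
elim: m => [|m IH]; first by rewrite count_pred0.
by rewrite zeta_areaS count_cat IH count_area_diag; apply: count_add => v /=; lia.
Qed.

Lemma count_neg_zeta_area m w :
  count (fun b => ~~ b) (zeta_area m w) = count (fun v => v.+1 < m) w.
Proof.
elim: m => [|m IH]; first by rewrite count_pred0.
by rewrite zeta_areaS count_cat IH count_neg_area_diag; apply: count_add => v /=; lia.
Qed.

Lemma zeta_area_cut p m w :
  p <= m -> all (fun v => v.+1 < p) w -> zeta_area m w = zeta_area p w.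
Proof.
elim: m => [|m IH] hpm hw; first by case: p hpm {hw}.
case: (ltngtP p m.+1) hpm => // [hpm|->] _ //.
rewrite zeta_areaS IH // area_diag_nil ?cats0 //.
by apply: sub_all hw => v hv; apply/andP; split; apply/eqP; lia.
Qed.

Lemma area_diag_top l w :
  all (fun v => v <= l) w -> area_diag l.+1 w = nseq (count_mem l w) false.
Proof.
elim: w => //= v w IH /andP[hv /IH {}IH]; rewrite area_diag_cons IH.
case: (eqVneq v l) => [->|hvl] /=; first by rewrite (ltn_eqF (ltnSn l)) eqxx orbT add0n.
by rewrite eqSS (negbTE hvl) orbF ifF //; apply/eqP; lia.
Qed.

Definition ascent_free (l : nat) (t : seq nat) : Prop :=
  forall i j, i < j -> (nth 0 t i).+1 = l -> nth 0 t j != l.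

Lemma ascent_free_drop l t m : ascent_free l t -> ascent_free l (drop m t).
Proof. by move=> H i j hij; rewrite !nth_drop; apply: H; rewrite ltn_add2l. Qed.

Lemma ascent_free_nseq l t m : ascent_free l t -> ascent_free l (nseq m l ++ t).
Proof.
move=> H i j hij; rewrite !nth_cat !size_nseq !nth_nseq.
case: (ltnP i m) => him; first by lia.
rewrite ifF; last by apply/negbTE; lia.
by apply: H; lia.
Qed.

Lemma area_diag_ascent_free l t : ascent_free l t ->
  area_diag l t = nseq (count_mem l t) true ++ nseq (count (fun v => v.+1 == l) t) false.
Proof.
elim: t => //= v t IH H.
have Ht : ascent_free l t by move=> i j hij; apply: (H i.+1 j.+1).
rewrite area_diag_cons (IH Ht).
case: (eqVneq v l) => [->|_] /=; first by rewrite add0n (gtn_eqF (ltnSn l)).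
case: (eqVneq v.+1 l) => [hv|_] /=; last by rewrite !add0n.
suff /count_memPn -> : l \notin t by [].
by apply/(nthP 0) => -[j _ hjl]; have := H 0 j.+1 erefl hv; rewrite /= hjl eqxx.
Qed.

Lemma count_insert_at (p : pred nat) k a s : count p (insert_at k a s) = p a + count p s.
Proof. by rewrite /insert_at count_cat /= addnCA -count_cat cat_take_drop. Qed.

Lemma all_insert_at (p : pred nat) k a s : all p (insert_at k a s) = p a && all p s.
Proof. by rewrite /insert_at all_cat /= andbCA -all_cat cat_take_drop. Qed.

Lemma area_diag_insert_at d k a w : a != d -> a.+1 != d ->
  area_diag d (insert_at k a w) = area_diag d w.
Proof.
move=> /negbTE ha /negbTE ha'.
by rewrite area_diag_cat area_diag_cons ha ha' -area_diag_cat cat_take_drop.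
Qed.

Lemma zeta_area_insert w k l :
  all (fun v => v <= l) w -> ascent_free l (drop k w) ->
  let r := count_mem l w + count (fun v => v.+1 == l) (drop k w) in
  exists X, zeta_area l.+2 w = X ++ nseq r false /\
            zeta_area l.+2 (insert_at k l w) = X ++ true :: nseq r.+1 false.
Proof.
move=> hw hk r.
have top_diags u : zeta_area l.+2 u = zeta_area l u ++ area_diag l u ++ area_diag l.+1 u.
  by rewrite !zeta_areaS catA.
have low_diags : zeta_area l (insert_at k l w) = zeta_area l w.
  congr flatten; apply/eq_in_map => d; rewrite mem_iota => /andP[_ hd].
  by rewrite area_diag_insert_at //; apply/eqP; lia.
set j := count_mem l (drop k w); set c := count (fun v => v.+1 == l) (drop k w).
have diag_w : area_diag l w = area_diag l (take k w) ++ nseq j true ++ nseq c false.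
  by rewrite -{1}(cat_take_drop k w) area_diag_cat (area_diag_ascent_free hk).
have diag_w' : area_diag l (insert_at k l w) =
               area_diag l (take k w) ++ true :: nseq j true ++ nseq c false.
  by rewrite area_diag_cat area_diag_cons eqxx (area_diag_ascent_free hk).
exists (zeta_area l w ++ area_diag l (take k w) ++ nseq j true).
rewrite !top_diags low_diags diag_w diag_w' !area_diag_top ?all_insert_at ?leqnn //.
have nseq_rot (x : bool) m s : x :: nseq m x ++ s = nseq m x ++ x :: s.
  by elim: m => //= m ->.
rewrite count_insert_at /= eqxx -!catA /r /c; split; do 2 congr (_ ++ _).
  by rewrite -nseqD addnC.
rewrite cat_cons -catA nseq_rot -nseqD -[false :: nseq _ _]/(nseq _.+1 false).
by congr (_ ++ _ :: nseq _ _); rewrite /=; lia.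
Qed.

Lemma add_final_peak_cat n X r :
  count id X = n -> count (fun b => ~~ b) X + r = n ->
  [/\ r <= n, passes_through (X ++ nseq r false) (n - r) n &
      add_final_peak n (X ++ nseq r false) (n - r) = X ++ true :: nseq r.+1 false].
Proof.
move=> hup hright.
have hX : size X = n + (n - r).
  by rewrite -(count_predC id X) hup; move: (count _ X) hright => c; lia.
split; first lia.
  by exists (size X); rewrite ?size_cat ?leq_addr // take_size_cat //; split; lia.
by rewrite /add_final_peak -hX take_size_cat //; congr (_ ++ _ :: nseq _ _); lia.
Qed.

Lemma zeta_area_insert_final_peak n w k l :
  area_seq w -> size w = n -> all (fun v => v <= l) w -> l <= n ->
  ascent_free l (drop k w) ->
  let r := count_mem l w + count (fun v => v.+1 == l) (drop k w) in
  [/\ r <= n, passes_through (zeta_area n.+1 w) (n - r) n &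
      zeta_area n.+2 (insert_at k l w) = add_final_peak n (zeta_area n.+1 w) (n - r)].
Proof.
move=> hw hs hl hln hk r.
have [X [zw zw']] := zeta_area_insert hl hk.
have hlt : all (fun v => v < n) w by rewrite -hs; exact: area_seq_lt_size.
have cut_l u : all (fun v => v <= l) u -> zeta_area n.+2 u = zeta_area l.+2 u.
  by move=> hu; apply: zeta_area_cut; rewrite ?ltnS //; apply: sub_all hu.
have zw_n : zeta_area n.+1 w = X ++ nseq r false.
  by rewrite -(@zeta_area_cut n.+1 n.+2) // cut_l // zw.
rewrite zw_n cut_l ?all_insert_at ?leqnn ?hl // zw'.
have := count_zeta_area n.+1 w; have := count_neg_zeta_area n.+1 w.
rewrite zw_n !count_cat !count_nseq /= mul0n mul1n addn0.
have count_all (p : pred nat) : all p w -> count p w = n by rewrite all_count hs => /eqP.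
have -> : count (fun v => v < n.+1) w = n.
  by apply: count_all; apply: sub_all hlt => v /ltnW.
have -> : count (fun v => v.+1 < n.+1) w = n by exact: count_all.
by move=> hright hup; have [? ? ->] := add_final_peak_cat hup hright.
Qed.

(** * An area sequence is determined by its poset *)

Definition grading (T : Type) (P : rel T) (g : T -> nat) : Prop :=
  (forall i j, P i j -> g i < g j) /\
  (forall j, 0 < g j -> exists2 i, P i j & (g i).+1 = g j).

Lemma grading_le T (P : rel T) g1 g2 :
  grading P g1 -> grading P g2 -> forall j, g1 j <= g2 j.
Proof.
move=> [_ wit1] [mono2 _] j; have [m] := ubnP (g2 j); elim: m j => // m IH j hj.
case: (posnP (g1 j)) => [-> //|/wit1[i hij <-]].
have hi := mono2 _ _ hij.
exact: leq_ltn_trans (IH i (leq_trans hi hj)) hi.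
Qed.

Lemma grading_unique T (P : rel T) g1 g2 : grading P g1 -> grading P g2 -> g1 =1 g2.
Proof. by move=> h1 h2 j; apply/anti_leq; rewrite (grading_le h1 h2) (grading_le h2 h1). Qed.

Lemma grading_iso T U (P : rel T) (Q : rel U) (h : T -> U) g :
  bijective h -> (forall i j, P i j = Q (h i) (h j)) -> grading Q g -> grading P (g \o h).
Proof.
case=> h' hK Kh hPQ [mono wit]; split=> [i j|j]; first by rewrite hPQ; exact: mono.
by move=> /wit[i hij hi]; exists (h' i); rewrite /= ?hPQ Kh.
Qed.

Lemma Prel_lt w i j : Prel w i j -> nth 0 w i < nth 0 w j.
Proof. by case/orP=> [|/andP[/eqP <- _]] //; rewrite addn2; apply: ltnW. Qed.

Lemma area_seq_ivt w i p a : area_seq w -> i <= p ->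
  nth 0 w i <= a < nth 0 w p -> exists2 j, i <= j < p & nth 0 w j = a.
Proof.
case=> _ hS; elim: p => [|p IH] hip /andP[hia hap].
  by move: hip hia; rewrite leqn0 => /eqP ->; lia.
case: (eqVneq i p.+1) => [hi|hne]; first by subst i; lia.
have {}hip : i <= p by lia.
case: (ltnP a (nth 0 w p)) => hap'.
  by have [|j hj <-] := IH hip; [rewrite hia | exists j => //; lia].
by exists p; [lia | have := hS p; lia].
Qed.

Lemma area_seq_grading m w : area_seq w ->
  grading (fun i j : 'I_m => Prel w i j) (fun j => nth 0 w j).
Proof.
move=> hw; split=> [i j|j hj]; first exact: Prel_lt.
have [|i /andP[_ hij] hi] := @area_seq_ivt w 0 j (nth 0 w j).-1 hw (leq0n _).
  by rewrite hw.1; lia.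
exists (Ordinal (ltn_trans hij (ltn_ord j))); last by rewrite /= hi prednK.
by rewrite /Prel /= hi prednK // eqxx hij orbT.
Qed.

Lemma count_take_sum (p : pred nat) w j :
  count p (take j w) = \sum_(i < size w) (p (nth 0 w i) && (i < j)).
Proof.
elim: w j => [|v w IH] [|j]; rewrite ?big_ord0 // big_ord_recl /= /bump.
  by rewrite andbF big1 // => i _; rewrite andbF.
by rewrite IH andbT; congr (_ + _); apply: eq_bigr => i _; rewrite add0n add1n ltnS.
Qed.

Lemma count_sum (p : pred nat) w : count p w = \sum_(i < size w) p (nth 0 w i).
Proof.
by rewrite -{1}(take_size w) count_take_sum; apply: eq_bigr => i _; rewrite ltn_ord andbT.
Qed.

Lemma count_take_lt (p : pred nat) w i j s :
  i <= s < j -> s < size w -> p (nth 0 w s) -> count p (take i w) < count p (take j w).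
Proof.
move=> /andP[his hsj] hs hp; rewrite !count_take_sum.
rewrite [X in X < _](bigD1 (Ordinal hs)) ?[X in _ < X](bigD1 (Ordinal hs)) //=.
rewrite hp hsj (ltnNge s i) his /= add0n add1n ltnS; apply: leq_sum => k _.
case: (p _) => //=; case: ltnP => // hki.
by rewrite (leq_trans hki (leq_trans his (ltnW hsj))).
Qed.

Definition npred (w : seq nat) (j : nat) : nat := \sum_(i < size w) Prel w i j.

Lemma npredE w j :
  npred w j = count (fun v => v.+2 <= nth 0 w j) w +
              count (fun v => v.+1 == nth 0 w j) (take j w).
Proof.
rewrite count_sum count_take_sum -big_split; apply: eq_bigr => i _ /=.
rewrite /Prel addn2; case: leqP => h //=.
by rewrite (_ : _ == _ = false) //; apply/eqP; lia.
Qed.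

Definition level_count (w : seq nat) (v c : nat) : nat :=
  \sum_(0 <= j < size w) ((nth 0 w j == v) && (npred w j <= c)).

(* If w1 and w2 first differ at i, with w1_i < w2_i = u, then every later entry
   u of w1 is preceded by an entry u - 1 placed after i, hence has more
   predecessors than the entry u of w2 at i. *)
Lemma level_count_lt w1 w2 i :
  area_seq w1 -> size w1 = size w2 -> i < size w1 -> take i w1 = take i w2 ->
  (forall p : pred nat, count p w1 = count p w2) -> nth 0 w1 i < nth 0 w2 i ->
  level_count w1 (nth 0 w2 i) (npred w2 i) < level_count w2 (nth 0 w2 i) (npred w2 i).
Proof.
move=> hw1 hsz hi htake hcnt hlt; set u := nth 0 w2 i; set c := npred w2 i.
have nth_pre j : j < i -> nth 0 w1 j = nth 0 w2 j.
  by move=> hj; rewrite -(nth_take 0 hj) htake nth_take.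
have npred_pre j : j < i -> npred w1 j = npred w2 j.
  move=> hj; rewrite !npredE nth_pre // hcnt; congr (_ + count _ _).
  by rewrite -(take_takel _ (ltnW hj)) htake take_takel // ltnW.
have npred_post j : i < j < size w1 -> nth 0 w1 j = u -> c < npred w1 j.
  move=> /andP[hij hj] hju; rewrite /c !npredE hju -hcnt ltn_add2l -htake.
  have [|s /andP[his hsj] hs] := @area_seq_ivt w1 i j u.-1 hw1 (ltnW hij); first lia.
  by apply: (count_take_lt (s := s)); rewrite ?his ?hs ?prednK //=; lia.
rewrite /level_count -hsz !(@big_cat_nat _ _ _ i 0 (size w1)) ?(ltnW hi) //= !(big_ltn hi).
rewrite (ltn_eqF hlt) eqxx leqnn /= add0n.
have -> : \sum_(0 <= j < i) ((nth 0 w1 j == u) && (npred w1 j <= c)) =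
          \sum_(0 <= j < i) ((nth 0 w2 j == u) && (npred w2 j <= c)).
  by apply: eq_big_nat => j /andP[_ hj]; rewrite nth_pre ?npred_pre.
have -> : \sum_(i.+1 <= j < size w1) ((nth 0 w1 j == u) && (npred w1 j <= c)) = 0.
  rewrite big_nat_cond big1 // => j /andP[hj _]; case: eqP => //= hju.
  by rewrite leqNgt npred_post.
lia.
Qed.

Lemma area_seq_eq w1 w2 : area_seq w1 -> area_seq w2 -> size w1 = size w2 ->
  (forall p : pred nat, count p w1 = count p w2) ->
  (forall v c, level_count w1 v c = level_count w2 v c) -> w1 = w2.
Proof.
move=> hw1 hw2 hsz hcnt hlc; apply: (eq_from_nth (x0 := 0) hsz) => i.
elim/ltn_ind: i => i IH hi.
have htake : take i w1 = take i w2.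
  apply: (eq_from_nth (x0 := 0)); first by rewrite !size_take_min hsz.
  by move=> t; rewrite size_take_min leq_min => /andP[hti hts]; rewrite !nth_take ?IH.
case: (ltngtP (nth 0 w1 i) (nth 0 w2 i)) => // hlt; exfalso.
  by have := level_count_lt hw1 hsz hi htake hcnt hlt; rewrite hlc ltnn.
have := level_count_lt hw2 (esym hsz) _ (esym htake) (fun p => esym (hcnt p)) hlt.
by rewrite -hsz hlc ltnn => /(_ hi).
Qed.

Lemma area_unique m w1 w2 : area_seq w1 -> area_seq w2 -> size w1 = m -> size w2 = m ->
  rel_iso m (Prel w1) (Prel w2) -> w1 = w2.
Proof.
move=> hw1 hw2 hs1 hs2 [h [hb hP]]; have hinj := bij_inj hb.
have lv : forall j : 'I_m, nth 0 w1 j = nth 0 w2 (h j).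
  exact: grading_unique (area_seq_grading m hw1) (grading_iso hb hP (area_seq_grading m hw2)).
have reindex (F : 'I_m -> nat) : \sum_(j < m) F (h j) = \sum_(j < m) F j.
  by rewrite [RHS](reindex_inj hinj).
have hcnt (p : pred nat) : count p w1 = count p w2.
  by rewrite !count_sum hs1 hs2 -[RHS]reindex; apply: eq_bigr => j _; rewrite lv.
have hnpred (j : 'I_m) : npred w1 j = npred w2 (h j).
  by rewrite /npred hs1 hs2 -[RHS]reindex; apply: eq_bigr => i _; rewrite hP.
apply: area_seq_eq => // [|v c]; first by rewrite hs1 hs2.
rewrite /level_count hs1 hs2 !big_mkord -[RHS]reindex.
by apply: eq_bigr => j _; rewrite lv hnpred.
Qed.

Lemma rel_iso_trans_inv n (P Q R : nat -> nat -> bool) :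
  rel_iso n P R -> rel_iso n Q R -> rel_iso n P Q.
Proof.
case=> f [fb hf] [g [[g' gK Kg] hg]]; exists (g' \o f); split.
  by apply: bij_comp => //; exists g.
by move=> i j; rewrite hf hg /= !Kg.
Qed.

(** * Adding an interval on the right *)

Lemma drop_insert_at k (a : nat) s : k <= size s -> drop k.+1 (insert_at k a s) = drop k s.
Proof.
by move=> hk; rewrite /insert_at drop_cat size_takel // ltnNge leqnSn subSnn /= drop0.
Qed.

Lemma cons_eq_insert_at (a : nat) s e :
  a :: s = insert_at e a s -> e <= size s -> s = nseq e a ++ drop e s.
Proof.
by elim: e s => [|e IH] [|y s] //= [<- heq] he; congr (_ :: _); exact: IH.
Qed.

Lemma insert_at_eq_drop (a : nat) s k e : insert_at k a s = insert_at e a s ->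
  k <= e -> e <= size s -> drop k s = nseq (e - k) a ++ drop e s.
Proof.
elim: k s e => [|k IH] s e.
  by rewrite subn0 drop0 {1}/insert_at take0 drop0 => heq _; exact: cons_eq_insert_at.
case: s e => [|y s] [|e] //= [heq] hke hes; exact: IH.
Qed.

Lemma ascent_free_insert_at (a : nat) s k e : insert_at k a s = insert_at e a s ->
  k <= size s -> e <= size s -> ascent_free a (drop e s) -> ascent_free a (drop k s).
Proof.
move=> heq hk he hfree; case: (leqP k e) => hke.
  by rewrite (insert_at_eq_drop heq hke he); apply: ascent_free_nseq.
by rewrite -(subnK (ltnW hke)) -drop_drop; apply: ascent_free_drop.
Qed.

Definition delete_at (k : nat) (s : seq nat) : seq nat := take k s ++ drop k.+1 s.

Lemma nth_delete_at e s t : nth 0 (delete_at e s) t = nth 0 s (bump e t).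
Proof.
rewrite /delete_at; case: (leqP e (size s)) => hes.
  rewrite nth_cat size_takel // /bump; case: (ltnP t e) => hte.
    by rewrite nth_take.
  by rewrite nth_drop add1n; congr nth; lia.
rewrite take_oversize ?drop_oversize ?cats0; [|lia|lia].
by rewrite /bump; case: leqP => h //=; rewrite !nth_default //; lia.
Qed.

Lemma size_delete_at e s : e < size s -> size (delete_at e s) = (size s).-1.
Proof. by move=> he; rewrite size_cat size_takel ?size_drop 1?ltnW //; lia. Qed.

Lemma insert_at_delete_at e s : e < size s -> insert_at e (nth 0 s e) (delete_at e s) = s.
Proof.
move=> he; have hst : size (take e s) = e by rewrite size_takel // ltnW.
by rewrite /insert_at take_size_cat // drop_size_cat // -drop_nth // cat_take_drop.
Qed.

Lemma Prel_delete_at e w i j : Prel (delete_at e w) i j = Prel w (bump e i) (bump e j).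
Proof. by rewrite /Prel !nth_delete_at !ltnNge leq_bump2. Qed.

Lemma area_seq_delete_at e w : area_seq w -> (forall t, nth 0 w t <= nth 0 w e) ->
  area_seq (delete_at e w).
Proof.
case=> h0 hS hmax; split=> [|t]; rewrite !nth_delete_at /bump.
  by case: e hmax => [|e] hmax //=; have := hmax 1; rewrite h0 leqn0 => /eqP.
case: (leqP e t) => het; first by rewrite (leq_trans het) //= !add1n.
case: (ltngtP t.+1 e) => [_|hte|hte] /=; rewrite ?add0n ?add1n; [exact: hS | lia |].
by apply: leq_trans (hmax _) _; rewrite -hte hS.
Qed.

Lemma rel_iso_delete_at n w (Q : nat -> nat -> bool) (f : 'I_n.+1 -> 'I_n.+1) (e : 'I_n.+1) :
  bijective f -> (forall i j : 'I_n.+1, Prel w i j = Q (f i) (f j)) -> f e = ord_max ->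
  rel_iso n (Prel (delete_at e w)) Q.
Proof.
move=> fb hf he.
have hlt (i : 'I_n) : f (lift e i) < n.
  rewrite ltn_neqAle -ltnS ltn_ord andbT; apply: contra (neq_lift e i) => /eqP hn.
  by rewrite -(inj_eq (bij_inj fb)) he; apply/eqP/val_inj; rewrite /= hn.
pose g (i : 'I_n) := Ordinal (hlt i).
exists g; split=> [|i j]; last by rewrite Prel_delete_at; exact: hf (lift e i) (lift e j).
by apply: injF_bij => i j /(congr1 val) /= /val_inj /(bij_inj fb) /lift_inj.
Qed.

Section AddInterval.

Variables (R : realType) (n : nat) (x : nat -> R) (lev : nat -> nat).
Hypothesis hx : forall i, (i < n)%N -> (x i <= x i.+1)%R.
Hypothesis hlev : forall j, (j <= n)%N ->
  lev j = \max_(i < n.+1 | (x i + 1 < x j)%R) (lev i).+1.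

Let prec (i j : nat) : bool := (x i + 1 < x j)%R.

Lemma x_le_last j : j <= n -> (x j <= x n)%R.
Proof.
move=> hj; apply: (Order.NatMonotonyTheory.nondecn_inP (D := [pred i | i <= n]));
  rewrite ?inE //.
  by move=> a b _ hb c /andP[_ hc]; rewrite inE (leq_trans (ltnW hc) hb).
by move=> i _; rewrite inE => /hx.
Qed.

Lemma level_grading : grading (fun i j : 'I_n.+1 => prec i j) (fun j => lev j).
Proof.
split=> [i j hij|j]; rewrite (hlev (ltn_ord j)).
  exact: (leq_bigmax_cond (F := fun i : 'I_n.+1 => (lev i).+1)).
case: (pickP (fun i : 'I_n.+1 => prec i j)) => [i0 hi0|none]; last by rewrite big_pred0.
by rewrite (bigop.bigmax_eq_arg i0 hi0); case: arg_maxnP => // a ha _ _; exists a.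
Qed.

Lemma level_le_last j : j <= n -> lev j <= lev n.
Proof.
move=> hj; rewrite (hlev hj) (hlev (leqnn n)); apply/bigmax_leqP => i hi.
apply: (leq_bigmax_cond (F := fun i : 'I_n.+1 => (lev i).+1)).
exact: lt_le_trans hi (x_le_last hj).
Qed.

Variables (w : seq nat) (f : 'I_n.+1 -> 'I_n.+1) (e : 'I_n.+1).
Hypotheses (hw : area_seq w) (hsize : size w = n.+1) (fb : bijective f)
  (hf : forall i j : 'I_n.+1, Prel w i j = prec (f i) (f j)) (he : f e = ord_max).

Lemma area_level (j : 'I_n.+1) : nth 0 w j = lev (f j).
Proof.
exact: grading_unique (area_seq_grading n.+1 hw) (grading_iso fb hf level_grading) j.
Qed.

Lemma area_le_top t : nth 0 w t <= lev n.
Proof.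
case: (ltnP t n.+1) => ht; last by rewrite nth_default ?hsize.
by rewrite (area_level (Ordinal ht)) level_le_last // -ltnS.
Qed.

Lemma all_area_le_top : all (fun v => v <= lev n) w.
Proof. by apply/(all_nthP 0) => t _; exact: area_le_top. Qed.

Lemma area_top : nth 0 w e = lev n.
Proof. by rewrite area_level he. Qed.

Lemma top_level_le : lev n <= n.
Proof. by rewrite -area_top; apply: leq_trans (area_seq_le _ hw) _; rewrite -ltnS. Qed.

Lemma area_insert_top v : area_seq v -> size v = n -> rel_iso n (Prel v) prec ->
  w = insert_at e (lev n) v.
Proof.
move=> hv hsv hU.
have <- : delete_at e w = v.
  apply: (area_unique (area_seq_delete_at hw _) hv _ hsv).
  - by move=> t; rewrite area_top area_le_top.
  - by rewrite size_delete_at hsize.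
  - exact: rel_iso_trans_inv (rel_iso_delete_at fb hf he) hU.
by rewrite -area_top insert_at_delete_at // hsize.
Qed.

(* An entry l - 1 after e followed by an entry l precedes that entry, so its
   interval precedes I_{n+1}; then it precedes e in P(w), which is impossible
   for an entry l - 1 placed after the entry l at e. *)
Lemma ascent_free_after_top : ascent_free (lev n) (drop e.+1 w).
Proof.
move=> s p hsp; rewrite !nth_drop => hs; apply/eqP => hp.
have hlt t : nth 0 w t = lev n -> t < n.+1.
  by move=> ht; rewrite -hsize ltnNge; apply/negP => /(nth_default 0); rewrite ht -hs.
have hs' : e.+1 + s < n.+1.
  by apply: leq_ltn_trans (hlt _ hp); rewrite leq_add2l ltnW.
have hsp' : prec (f (Ordinal hs')) (f (Ordinal (hlt _ hp))).
  by rewrite -hf /Prel /= hs hp eqxx ltn_add2l hsp orbT.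
have : Prel w (Ordinal hs') e.
  by rewrite hf he; apply: lt_le_trans hsp' (x_le_last _); rewrite -ltnS.
by rewrite /Prel /= area_top -hs addn2 ltnn eqxx /=; lia.
Qed.

End AddInterval.

Theorem mainTheorem8 (R : realType) (n : nat) (x : nat -> R)
  (hx : forall i, (i < n)%N -> (x i <= x i.+1)%R)
  (lev : nat -> nat)
  (hlev : forall j, (j <= n)%N ->
     lev j = \max_(i < n.+1 | (x i + 1 < x j)%R) (lev i).+1)
  (D D' : seq bool) (hD : dyck n D) (hD' : dyck n.+1 D')
  (hU : rel_iso n (Prel (area D)) (fun i j => (x i + 1 < x j)%R))
  (hU' : rel_iso n.+1 (Prel (area D')) (fun i j => (x i + 1 < x j)%R)) :
  let l := lev n in
  (exists2 k, (k <= n)%N & area D' = insert_at k l (area D)) /\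
  forall k, (k <= n)%N -> area D' = insert_at k l (area D) ->
    let r := (count_mem l (area D) +
              count (fun a => a.+1 == l) (drop k.+1 (area D')))%N in
    [/\ (r <= n)%N, passes_through (zeta n D) (n - r) n &
        zeta n.+1 D' = add_final_peak n (zeta n D) (n - r)].
Proof.
move=> l.
have [_ _ hw sw] := dyck_area hD; have [_ _ hw' sw'] := dyck_area hD'.
case: (hU') => f [fb hf].
have [e he] : exists e, f e = ord_max by case: fb => g _ Kg; exists (g ord_max).
have hins : area D' = insert_at e l (area D).
  exact (area_insert_top hx hlev hw' sw' fb hf he hw sw hU).
have he_size : (e <= size (area D))%N by rewrite sw -ltnS.
split; first by exists e; rewrite // -ltnS.
move=> k hk hkw r.
have hfree : ascent_free l (drop k (area D)).
  apply: (ascent_free_insert_at (etrans (esym hkw) hins)) => //; first by rewrite sw.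
  rewrite -(drop_insert_at l he_size) -hins.
  exact (ascent_free_after_top hx hlev hw' sw' fb hf he).
have := all_area_le_top hx hlev hw' sw' fb hf; rewrite hins all_insert_at => /andP[_ hle].
rewrite (zeta_dyck hD) (zeta_dyck hD') /r hkw drop_insert_at ?sw //.
apply: zeta_area_insert_final_peak => //; exact (top_level_le hlev hw' fb hf he).
Qed.
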